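(* Let $(\gamma_{n})_{n\in\mathbb{N}}$ be nonnegative integrable functions on $[0,\infty)$ with $\rho:=\sup_{n\in\mathbb{N}}\int_{0}^{\infty}\gamma_{n}(t)dt<1$, and let $a(t)>0$ satisfy $a(t)/t\to0$ as $t\to\infty$. For $M\in\mathbb{N}$, $\theta\in\mathbb{R}$ and $t\ge0$ define $G_{M}(t,\theta,M)=\theta$ and recursively, for $0\le n\le M-1$, $$G_{n}(t,\theta,M)=\theta+\int_{0}^{t}\left(e^{G_{n+1}(t-s,\theta,M)}-1\right)\gamma_{n}(s)\,ds.$$ Then for any fixed $\theta\in\mathbb{R}$ there is some $k_{1}\ge\frac{1}{1-\rho}$ such that for all sufficiently large $t$, $$\left|G_{n}\left(s,\tfrac{a(t)}{t}\theta,M\right)\right|\le k_{1}\frac{a(t)}{t}|\theta|$$ uniformly for $1\le n\le M$, $M\in\mathbb{N}$ and $s\ge0$. *)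

From HB Require Import structures.
From mathcomp Require Import all_boot all_order all_algebra.
From mathcomp Require Import all_classical all_reals all_analysis.
Set Implicit Arguments. Unset Strict Implicit. Unset Printing Implicit Defensive.
Import Order.TTheory GRing.Theory Num.Theory.
Import numFieldNormedType.Exports.
Local Open Scope classical_set_scope.
Local Open Scope ring_scope.

(* Gaux gam M k t th = G_{M-k}(t, th, M):
   Gaux _ M 0 t th = th  (i.e. G_M = th), and for k+1 (n = M-(k+1)),
   G_n(t) = th + \int_[0,t] (exp(G_{n+1}(t-s)) - 1) gam_n(s) ds. *)
Fixpoint Gaux (R : realType) (gam : nat -> R -> R) (M : nat) (k : nat)
  (t th : R) : R :=
  match k with
  | 0%N => th
  | k'.+1 => th + Rintegral (@lebesgue_measure R) `[0, t]
      (fun s => (expR (Gaux gam M k' (t - s) th) - 1) * gam (M - k'.+1)%N s)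
  end.

(* G gam n t th M = G_n(t, th, M), meaningful for n <= M. *)
Definition G (R : realType) (gam : nat -> R -> R) (n : nat) (t th : R)
  (M : nat) : R := Gaux gam M (M - n)%N t th.

(* Write [K] for the target bound [2 |x| / (1 - rho)].  If every [|G_{n+1}|]
   is at most [K], then [|exp G_{n+1} - 1| <= exp K - 1], so the defining
   recursion gives [|G_n| <= |x| + (exp K - 1) rho].  Hence [K] is an
   invariant bound as soon as [|x| + (exp K - 1) rho <= K], and since
   [exp K - 1 <= K / (1 - K)] this holds whenever [K <= (1 - rho) / 2].  For
   [x = a(t) / t * theta] this smallness holds for all large [t]. *)
From HB Require Import structures.
From mathcomp Require Import all_boot all_order all_algebra.
From mathcomp Require Import all_classical all_reals all_analysis.
From mathcomp Require Import ring lra.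
Set Implicit Arguments. Unset Strict Implicit. Unset Printing Implicit Defensive.
Import Order.TTheory GRing.Theory Num.Theory.
Import numFieldNormedType.Exports.
Local Open Scope classical_set_scope.
Local Open Scope ring_scope.

(* The integrand of the recursion is not known to be measurable, so the
   integral estimates below avoid any measurability assumption on it. *)
Section integral_bounds_nonmeasurable.
Context d (T : measurableType d) (R : realType).
Variable mu : {measure set T -> \bar R}.

Lemma ge0_le_integral_nonmeasurable (D : set T) (f g : T -> \bar R) :
  (forall x, D x -> (0 <= f x)%E) -> (forall x, D x -> (f x <= g x)%E) ->
  (\int[mu]_(x in D) f x <= \int[mu]_(x in D) g x)%E.
Proof.
move=> f0 fg.
have g0 x : D x -> (0 <= g x)%E by move=> Dx; exact: le_trans (f0 _ Dx) (fg _ Dx).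
rewrite (ge0_integralE mu f0) (ge0_integralE mu g0).
apply: ereal_sup_le => _ [h hf <-]; exists h => // x.
apply: le_trans (hf x) _.
by rewrite /patch; case: ifP => // /set_mem Dx; exact: fg.
Qed.

Lemma le_normr_Rintegral_nonmeasurable (D : set T) (f g : T -> R) (r : R) :
  (forall x, D x -> `|f x| <= g x) ->
  (\int[mu]_(x in D) (g x)%:E <= r%:E)%E ->
  `|Rintegral mu D f| <= r.
Proof.
move=> fg gr.
have part_le (h : T -> \bar R) : (forall x, D x -> 0 <= h x)%E ->
    (forall x, D x -> h x <= (g x)%:E)%E ->
    (0 <= \int[mu]_(x in D) h x <= r%:E)%E.
  move=> h0 hg; rewrite integral_ge0 //=.
  exact: le_trans (ge0_le_integral_nonmeasurable h0 hg) gr.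
have g0 x : D x -> (0 <= (g x)%:E)%E.
  by move=> Dx; rewrite lee_fin (le_trans (normr_ge0 _) (fg _ Dx)).
have pos_le x : D x -> ((fun y => (f y)%:E)^\+ x <= (g x)%:E)%E.
  move=> Dx; rewrite funeposE ge_max g0 // andbT lee_fin.
  exact: le_trans (ler_norm _) (fg _ Dx).
have neg_le x : D x -> ((fun y => (f y)%:E)^\- x <= (g x)%:E)%E.
  move=> Dx; rewrite funenegE ge_max g0 // andbT -EFinN lee_fin.
  by rewrite (le_trans _ (fg _ Dx)) // -normrN ler_norm.
have /andP[P0 P1] := part_le _ (fun x _ => funepos_ge0 _ x) pos_le.
have /andP[N0 N1] := part_le _ (fun x _ => funeneg_ge0 _ x) neg_le.
rewrite /Rintegral integralE; move: P0 P1 N0 N1.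
case: (\int[mu]_(x in D) _)%E => [p| |]; case: (\int[mu]_(x in D) _)%E => [n| |] //=.
by rewrite !lee_fin => *; rewrite ler_norml; apply/andP; split; lra.
Qed.

End integral_bounds_nonmeasurable.

Lemma expR_mul1B_le1 (R : realType) (x : R) : expR x * (1 - x) <= 1.
Proof.
have [x1|x1] := leP x 1; last by have := expR_gt0 x; nra.
have : expR x * (1 - x) <= expR x * expR (- x).
  by rewrite ler_wpM2l ?expR_ge0 //; have := expR_ge1Dx (- x); lra.
by rewrite expRN mulfV // gt_eqF ?expR_gt0.
Qed.

(* The invariance condition [|x| + (exp K - 1) rho <= K] with [|x| = K (1 - rho) / 2]. *)
Lemma expR_invariance_ineq (R : realType) (rho K : R) :
  0 <= rho -> 0 <= K <= (1 - rho) / 2 ->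
  K * (1 - rho) / 2 + (expR K - 1) * rho <= K.
Proof.
move=> rho0 /andP[K0 Ksmall].
have exp_ineq := expR_mul1B_le1 K.
have : rho * (expR K - 1) * (1 - K) <= K * (1 + rho) / 2 * (1 - K) by nra.
rewrite ler_pM2r; last lra.
nra.
Qed.

Section Gaux_bounds.
Variables (R : realType) (gam : nat -> R -> R) (rho : R).
Hypothesis gam_ge0 : forall n t, 0 <= t -> 0 <= gam n t.
Hypothesis gam_int :
  forall n, (@lebesgue_measure R).-integrable `[0%R, +oo[ (EFin \o gam n).
Hypothesis gam_int_le :
  forall n, (\int[@lebesgue_measure R]_(u in `[0%R, +oo[) (gam n u)%:E <= rho%:E)%E.

Lemma integral_itv0_scaled_le (n : nat) (c s : R) : 0 <= c ->
  (\int[@lebesgue_measure R]_(u in `[0%R, s]) (c * gam n u)%:E <= (c * rho)%:E)%E.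
Proof.
move=> c0.
have sub : `[0%R, s] `<=` `[0%R, +oo[.
  by move=> u /=; rewrite !in_itv /= => /andP[-> _].
have gam0 (A : set R) : A `<=` `[0%R, +oo[ -> forall u, A u -> (0 <= (gam n u)%:E)%E.
  by move=> A0 u /A0; rewrite /= in_itv /= andbT lee_fin; exact: gam_ge0.
have int_s : (@lebesgue_measure R).-integrable `[0%R, s] (EFin \o gam n).
  exact: integrableS (gam_int n).
have mgam := measurable_int _ int_s.
under eq_integral do rewrite EFinM.
rewrite ge0_integralZl_EFin //; last exact: gam0.
rewrite EFinM lee_wpmul2l ?lee_fin // (le_trans _ (gam_int_le n)) //.
apply: ge0_subset_integral => //; last exact: gam0.
exact: measurable_int (gam_int n).
Qed.

Lemma Gaux_norm_le (M : nat) (x K : R) :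
  `|x| <= K -> `|x| + (expR K - 1) * rho <= K ->
  forall k s, `|Gaux gam M k s x| <= K.
Proof.
move=> xK invK k; elim: k => [|k IH] s //=.
have c0 : 0 <= expR K - 1 by have := expR_ge1Dx K; have := normr_ge0 x; lra.
suff : `|Rintegral (@lebesgue_measure R) `[0%R, s]
    (fun u => (expR (Gaux gam M k (s - u) x) - 1) * gam (M - k.+1) u)|
    <= (expR K - 1) * rho.
  set I := Rintegral _ _ _ => I_le; have := ler_normD x I; lra.
apply: le_normr_Rintegral_nonmeasurable (integral_itv0_scaled_le _ _ c0).
move=> u; rewrite /= in_itv /= => /andP[u0 _].
rewrite normrM (ger0_norm (gam_ge0 _ u0)); apply: ler_wpM2r; first exact: gam_ge0.
have := IH (s - u); rewrite ler_norml => /andP[yK1 yK2].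
have := expR_ge1Dx (Gaux gam M k (s - u) x).
have := expR_ge1Dx K; have := ler_expR (Gaux gam M k (s - u) x) K.
by rewrite yK2 /= ler_norml => *; apply/andP; split; lra.
Qed.

Lemma Gaux_linear_bound (M : nat) (x : R) : 0 <= rho < 1 ->
  2 / (1 - rho) * `|x| <= (1 - rho) / 2 ->
  forall k s, `|Gaux gam M k s x| <= 2 / (1 - rho) * `|x|.
Proof.
move=> /andP[rho0 rho1] small; set K := 2 / (1 - rho) * `|x|.
have rho_neq1 : 1 - rho != 0 by rewrite gt_eqF // subr_gt0.
have xE : `|x| = K * (1 - rho) / 2 by rewrite /K; field.
have K0 : 0 <= K by rewrite /K mulr_ge0 // divr_ge0 // subr_ge0 ltW.
apply: Gaux_norm_le; rewrite xE; first nra.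
by apply: expR_invariance_ineq => //; apply/andP.
Qed.

End Gaux_bounds.

Theorem lemma4p7 (R : realType) (gam : nat -> R -> R) (rho : R)
  (a : R -> R) (th : R) :
  (forall n t, 0 <= t -> 0 <= gam n t) ->
  (forall n, (@lebesgue_measure R).-integrable `[0%R, +oo[ (EFin \o gam n)) ->
  ereal_sup (range (fun n => (\int[@lebesgue_measure R]_(x in `[0%R, +oo[)
                                (gam n x)%:E)%E)) = rho%:E ->
  rho < 1 ->
  (forall t, 0 < t -> 0 < a t) ->
  (a t / t @[t --> +oo] --> 0) ->
  exists k1 : R, 1 / (1 - rho) <= k1 /\
    \forall t \near +oo, forall (M n : nat) (s : R),
      (1 <= n <= M)%N -> 0 <= s ->
      `|G gam n s (a t / t * th) M| <= k1 * (a t / t) * `|th|.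
Proof.
move=> gam_ge0 gam_int rho_sup rho1 a_gt0 a_cvg.
have gam_int_le n :
    (\int[@lebesgue_measure R]_(u in `[0%R, +oo[) (gam n u)%:E <= rho%:E)%E.
  by rewrite -rho_sup; apply: ereal_sup_ubound; exists n.
have rho0 : 0 <= rho.
  rewrite -lee_fin (le_trans _ (gam_int_le 0)) // integral_ge0 // => u.
  by rewrite /= in_itv /= lee_fin => /andP[/gam_ge0].
have rho_gt0 : 0 < 1 - rho by lra.
exists (2 / (1 - rho)); split; first by rewrite ler_pM2r ?invr_gt0 //; lra.
have x_cvg : a t / t * th @[t --> +oo] --> 0.
  by rewrite -(mul0r th); apply: cvgM => //; exact: cvg_cst.
have k1_gt0 : 0 < 2 / (1 - rho) by rewrite divr_gt0.
have eps_gt0 : 0 < (2 / (1 - rho))^-1 * ((1 - rho) / 2).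
  by rewrite mulr_gt0 ?invr_gt0 ?divr_gt0.
have x_small := (cvgr0Pnorm_lt _).1 x_cvg _ eps_gt0.
near=> t => M n s _ _.
have t0 : 0 < t by near: t; apply: nbhs_pinfty_gt; rewrite real0.
have q0 : 0 < a t / t by rewrite divr_gt0 ?a_gt0.
have -> : 2 / (1 - rho) * (a t / t) * `|th| = 2 / (1 - rho) * `|a t / t * th|.
  by rewrite normrM (gtr0_norm q0) !mulrA.
rewrite /G.
apply: (Gaux_linear_bound gam_ge0 gam_int gam_int_le); first by apply/andP.
by rewrite -ler_pdivlMl //; apply: ltW; near: t; exact: x_small.
Unshelve. all: by end_near.
Qed.
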